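(* Let $\mathcal{C}$ be a nonempty class of scoring rules, each of the form \[g(x,q)=\begin{cases}\int_x^q (v-x)\,d\lambda(v) & \text{if } x\le q,\\ \int_q^x (x-v)\,d\lambda(v) & \text{if } x>q,\end{cases}\] where $\lambda$ is a measure on $\mathbb{R}$ that is mutually absolutely continuous with Lebesgue measure and finite on every bounded interval (the measure $\lambda$ may differ between members of $\mathcal{C}$). Let $\{(X_i,B_i):i\in I\}$ be a collection of pairs, each consisting of a random variable $X_i$ and a nonempty event $B_i$, with conditional previsions (forecasts) $p_i=P(X_i\mid B_i)\in\mathbb{R}\cup\{\pm\infty\}$. Then the collection $\{p_i:i\in I\}$ is coherent$_1$ if and only if it is coherent$_3$ with respect to $\mathcal{C}$.
   Context: Let $\Omega$ be a nonempty set of states $\omega$; events are subsets of $\Omega$ and random variables are real-valued functions on $\Omega$. An event $B$ is identified with its indicator function, so $B(\omega)=1$ if $\omega\in B$ and $0$ otherwise. A conditional prevision $P(X\mid B)$ is an extended real number. Coherence$_1$: a collection $\{P(X_i\mid B_i):i\in I\}$ is coherent$_1$ if for every finite $\{i_1,\dots,i_n\}\subseteq I$, all real $\alpha_1,\dots,\alpha_n$ with $\alpha_j\ge 0$ whenever $P(X_{i_j}\mid B_{i_j})=+\infty$ and $\alpha_j\le 0$ whenever $P(X_{i_j}\mid B_{i_j})=-\infty$, and all real $c_1,\dots,c_n$ with $c_j=P(X_{i_j}\mid B_{i_j})$ whenever that prevision is finite, we have $\sup_\omega \sum_{j=1}^n \alpha_j B_{i_j}(\omega)[X_{i_j}(\omega)-c_j]\ge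 0$. Coherence$_3$ (with respect to a class $\mathcal{C}$ of scoring rules): forecasts $\{p_i:i\in I\}$ for the pairs $(X_i,B_i)$ are coherent$_3$ if for every finite $\{i_1,\dots,i_n\}\subseteq I$, every $g_1,\dots,g_n\in\mathcal{C}$, every set of real alternative forecasts $q_1,\dots,q_n$, and every choice of reals $c_1,\dots,c_n$ with $c_j=p_{i_j}$ when $p_{i_j}$ is finite and $c_j$ finite and lying between $q_j$ and $p_{i_j}$ when $p_{i_j}$ is infinite, we have \[\inf_\omega \sum_{j=1}^n B_{i_j}(\omega)\big[g_j(X_{i_j}(\omega),c_j)-g_j(X_{i_j}(\omega),q_j)\big]\le 0.\] *)

From HB Require Import structures.
From mathcomp Require Import all_boot all_order all_algebra.
From mathcomp Require Import all_classical all_reals all_analysis.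
Set Implicit Arguments. Unset Strict Implicit. Unset Printing Implicit Defensive.
Import Order.TTheory GRing.Theory Num.Theory.
Local Open Scope classical_set_scope.
Local Open Scope ring_scope.

Definition admissible_measure (R : realType)
  (lam : {measure set (measurableTypeR R) -> \bar R}) : Prop :=
  lam `<< (@lebesgue_measure R) /\ (@lebesgue_measure R) `<< lam /\
  (forall a b : R, (lam `[a, b]%classic < +oo)%E).

Definition score (R : realType)
  (lam : {measure set (measurableTypeR R) -> \bar R}) (x q : R) : R :=
  if x <= q then fine (\int[lam]_(v in `[x, q]%classic) (v - x)%:E)%E
  else fine (\int[lam]_(v in `[q, x]%classic) (x - v)%:E)%E.

Definition scoring_class (R : realType) (C : set (R -> R -> R)) : Prop :=
  forall g, C g -> exists lam, admissible_measure lam /\ g = score lam.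

(* Coherence_1 of {P(X_i | B_i) = p_i : i in I}.  A finite subset
   {i_1,...,i_n} of I is given by an injective map 'I_n -> I. *)
Definition coherent1 (R : realType) (I Omega : Type)
  (X : I -> Omega -> R) (B : I -> set Omega) (p : I -> \bar R) : Prop :=
  forall (n : nat) (ix : 'I_n -> I), injective ix ->
  forall alpha c : 'I_n -> R,
    (forall j, p (ix j) = +oo%E -> 0 <= alpha j) ->
    (forall j, p (ix j) = -oo%E -> alpha j <= 0) ->
    (forall j, p (ix j) \is a fin_num -> c j = fine (p (ix j))) ->
    (0 <= ereal_sup (range (fun w : Omega =>
       (\sum_(j < n) alpha j * \1_(B (ix j)) w * (X (ix j) w - c j))%:E)))%E.

(* Coherence_3 of forecasts {p_i} with respect to a class C of scoring
   rules. "c_j between q_j and p_{i_j}" (p infinite) is read inclusively. *)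
Definition coherent3 (R : realType) (I Omega : Type)
  (C : set (R -> R -> R))
  (X : I -> Omega -> R) (B : I -> set Omega) (p : I -> \bar R) : Prop :=
  forall (n : nat) (ix : 'I_n -> I), injective ix ->
  forall (g : 'I_n -> R -> R -> R) (q c : 'I_n -> R),
    (forall j, C (g j)) ->
    (forall j, p (ix j) \is a fin_num -> c j = fine (p (ix j))) ->
    (forall j, p (ix j) = +oo%E -> q j <= c j) ->
    (forall j, p (ix j) = -oo%E -> c j <= q j) ->
    (ereal_inf (range (fun w : Omega =>
       (\sum_(j < n) \1_(B (ix j)) w *
          (g j (X (ix j) w) (c j) - g j (X (ix j) w) (q j)))%:E)) <= 0)%E.

(* For [q <= c] the score difference [g(x, c) - g(x, q)] is the integral of
   [v - x] against [lambda] over [[q, c]], hence lies between the affine gambles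
   [(q - x) lambda[q, c]] and [(c - x) lambda[q, c]].  The upper bound shows
   that the coherence_1 condition for the stakes [+- lambda[q_j, c_j]] forces
   the coherence_3 condition.  Conversely, [s |-> lambda[a, s]] is continuous
   and strictly increasing, so given stakes [alpha_j] and [e > 0] there are a
   scale [t > 0] and forecasts [q_j] within [e] of [c_j] with
   [lambda[q_j, c_j] = t |alpha_j|] on the side of [c_j] given by the sign of
   [alpha_j]; by the lower bound a sure loss [sum_j alpha_j B_j (X_j - c_j) <= -d]
   then becomes a sure score gain of at least [t d - e t sum_j |alpha_j|] > 0. *)

From HB Require Import structures.
From mathcomp Require Import all_boot all_order all_algebra.
From mathcomp Require Import all_classical all_reals all_analysis.
From mathcomp Require Import ring lra measurable_realfun.
Set Implicit Arguments. Unset Strict Implicit. Unset Printing Implicit Defensive.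
Import Order.TTheory GRing.Theory Num.Theory Num.Def numFieldNormedType.Exports.
Local Open Scope classical_set_scope.
Local Open Scope ring_scope.

Lemma exists_scale_le (R : realFieldType) (J : finType) (m a : J -> R) :
  (forall j, 0 < m j) -> exists2 t : R, 0 < t & forall j, t * `|a j| <= m j.
Proof.
move=> m0; pose t := \big[minr/1]_j (m j / (`|a j| + 1)).
have a1 j : 0 < `|a j| + 1 by rewrite ltr_pwDr.
exists t; first by apply/bigmin_gtP; split => // j _; rewrite divr_gt0.
move=> j; have : t <= m j / (`|a j| + 1) by exact: bigmin_le.
rewrite ler_pdivlMr //; apply: le_trans.
by rewrite ler_wpM2l ?lerDl // ltW //; apply/bigmin_gtP; split => // i _; rewrite divr_gt0.
Qed.

Lemma ereal_inf_range_le_oppe_sup (R : realType) (T : Type) (f h : T -> R) :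
  (forall w, f w <= - h w) ->
  (ereal_inf (range (fun w => (f w)%:E)) <= - ereal_sup (range (fun w => (h w)%:E)))%E.
Proof.
move=> fh; rewrite /ereal_inf leeN2; apply: ge_ereal_sup => _ [w _ <-].
apply: (@le_trans _ _ (- (f w)%:E)%E); first by rewrite -EFinN lee_fin lerNr.
by apply: ereal_sup_ubound; exists (f w)%:E => //; exists w.
Qed.

Lemma ereal_sup_range_lt0 (R : realType) (T : Type) (f : T -> R) :
  (ereal_sup (range (fun w => (f w)%:E)) < 0)%E -> exists2 d : R, 0 < d & forall w, f w <= - d.
Proof.
have ub w : ((f w)%:E <= ereal_sup (range (fun w => (f w)%:E)))%E.
  by apply: ereal_sup_ubound; exists w.
case: (ereal_sup _) ub => [r| |] ub //.
- rewrite lte_fin => r0; exists (- r); rewrite ?oppr_gt0 // opprK => w.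
  by rewrite -lee_fin; exact: ub.
- by move=> _; exists 1 => // w; have := ub w; rewrite leeNy_eq.
Qed.

Section interval_mass.
Context {R : realType} (lam : {measure set (measurableTypeR R) -> \bar R}).
Hypothesis lam_itv_fin : forall a b : R, (lam `[a, b]%classic < +oo)%E.
Hypothesis lam_set1 : forall a : R, lam [set a] = 0%E.
Local Notation T := (measurableTypeR R).

Definition mass (a b : R) : R := fine (lam `[a, b]%classic).

Definition moment (a b x : R) : R :=
  fine (\int[lam]_(v in `[a, b]%classic) (v - x)%:E)%E.

Lemma EFin_mass a b : (mass a b)%:E = lam `[a, b]%classic.
Proof. by rewrite fineK // ge0_fin_numE. Qed.

Lemma mass_ge0 a b : 0 <= mass a b.
Proof. by rewrite -lee_fin EFin_mass measure_ge0. Qed.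

Lemma integrable_affine a b s r :
  lam.-integrable `[a, b]%classic (fun v : T => (s * v + r)%:E).
Proof.
apply: (measurable_bounded_integrable (f := fun v : T => s * v + r)) => //.
  by apply: measurable_funD => //; apply: measurable_funM.
exists (`|s| * (`|a| + `|b|) + `|r|); split => // M hM v /= /[!in_itv] /= /andP[av vb].
have hv : `|v| <= `|a| + `|b|.
  have := ler_norm a; have := ler_norm b; have := ler_norm (- a); have := ler_norm (- b).
  rewrite !normrN ler_norml => *; apply/andP; split; lra.
apply: le_trans (ltW hM); rewrite (le_trans (ler_normD _ _)) // lerD2r normrM.
exact: ler_wpM2l.
Qed.

Lemma integrable_affine_shift a b x :
  lam.-integrable `[a, b]%classic (fun v : T => (v - x)%:E).
Proof.
by apply: eq_integrable (integrable_affine a b 1 (- x)) => // v _; rewrite mul1r.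
Qed.

Lemma EFin_moment a b x :
  (moment a b x)%:E = (\int[lam]_(v in `[a, b]%classic) (v - x)%:E)%E.
Proof. by rewrite fineK //; exact: integrable_fin_num (integrable_affine_shift _ _ _). Qed.

Lemma integral_itv_split (f : T -> \bar R) a b c :
  measurable_fun [set: T] f -> a <= b -> b <= c ->
  (\int[lam]_(v in `[a, c]%classic) f v =
   \int[lam]_(v in `[a, b]%classic) f v + \int[lam]_(v in `[b, c]%classic) f v)%E.
Proof.
move=> mf ab bc.
have -> : (`[a, c]%classic : set T) = `[a, b]%classic `|` `]b, c]%classic.
  by apply: itv_bndbnd_setU; rewrite bnd_simp.
rewrite integral_setU //; last 2 first.
- exact: measurable_funTS mf.
- by apply/disj_setPS => x [] /=; rewrite !in_itv /= => /andP[_ ?] /andP[? _]; lra.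
congr (_ + _)%E.
have -> : (`[b, c]%classic : set T) = [set b] `|` `]b, c]%classic.
  by rewrite setU1itv // bnd_simp.
rewrite integral_setU //; last 2 first.
- exact: measurable_funTS mf.
- by apply/disj_setPS => x [] /= ->; rewrite !in_itv /= ltxx.
by rewrite [in RHS]null_set_integral ?add0e //; exact: measurable_funTS mf.
Qed.

Lemma mass_split a b c : a <= b -> b <= c -> mass a c = mass a b + mass b c.
Proof.
move=> ab bc; apply: EFin_inj; rewrite EFinD !EFin_mass.
have := integral_itv_split (f := cst 1%E) (measurable_cst _) ab bc.
by rewrite !integral_cst ?mul1e.
Qed.

Lemma moment_split a b c x : a <= b -> b <= c ->
  moment a c x = moment a b x + moment b c x.
Proof.
move=> ab bc; apply: EFin_inj; rewrite EFinD !EFin_moment.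
by apply: integral_itv_split ab bc; apply/measurable_EFinP; exact: measurable_funB.
Qed.

Lemma moment_shift a b x y : moment a b x = moment a b y + (y - x) * mass a b.
Proof.
apply: EFin_inj; rewrite EFinD EFinM EFin_mass !EFin_moment -integral_cst //.
rewrite -integralD_EFin //; first by apply: eq_integral => v _; congr EFin; ring.
- exact: integrable_affine_shift.
- by apply: eq_integrable (integrable_affine a b 0 (y - x)) => // v _; rewrite mul0r add0r.
Qed.

Lemma moment_oppr a b x :
  fine (\int[lam]_(v in `[a, b]%classic) (x - v)%:E)%E = - moment a b x.
Proof.
rewrite /moment -fineN -integralN; last exact: integrable_add_def (integrable_affine_shift a b x).
by congr fine; apply: eq_integral => v _; rewrite -EFinN opprB.
Qed.

Lemma moment_ge a b x : (a - x) * mass a b <= moment a b x.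
Proof.
rewrite (moment_shift a b x a) lerDr /moment fine_ge0 // integral_ge0 // => v.
by rewrite /= in_itv /= lee_fin subr_ge0 => /andP[].
Qed.

Lemma moment_le a b x : moment a b x <= (b - x) * mass a b.
Proof.
rewrite (moment_shift a b x b) gerDr -oppr_ge0 -moment_oppr fine_ge0 // integral_ge0 // => v.
by rewrite /= in_itv /= lee_fin subr_ge0 => /andP[].
Qed.

Lemma score_diff q c x : q <= c -> score lam x c - score lam x q = moment q c x.
Proof.
rewrite /score => qc; case: (lerP x c) => xc; case: (lerP x q) => xq;
  rewrite -?/(moment _ _ _) ?moment_oppr.
- by rewrite (moment_split x xq qc); ring.
- by rewrite (moment_split x (ltW xq) xc); ring.
- lra.
- by rewrite (moment_split x qc (ltW xc)); ring.
Qed.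

Lemma mass_le_subitv a b c d : a <= c -> d <= b -> mass c d <= mass a b.
Proof.
move=> ac db; rewrite -lee_fin !EFin_mass le_measure ?inE //.
by move=> v /=; rewrite !in_itv /= => /andP[cv vd]; apply/andP; split; lra.
Qed.

Lemma mass_subr_le a s t : s <= t -> mass a t - mass a s <= mass s t.
Proof.
move=> st; rewrite lerBlDl -lee_fin EFinD !EFin_mass.
apply: le_trans (measureU2 _ _ _) => //.
rewrite le_measure ?inE //; first exact: measurableU.
move=> v /=; rewrite in_itv /= => /andP[av vt].
by case: (lerP v s) => vs; [left|right]; rewrite /= in_itv /=; apply/andP; split; lra.
Qed.

Lemma massxx a : mass a a = 0.
Proof. by rewrite /mass set_itv1 lam_set1. Qed.

Lemma mass_small_itv s e : 0 < e -> exists2 d, 0 < d & mass (s - d) (s + d) < e.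
Proof.
move=> e0; pose r n : R := n.+1%:R^-1.
have r0 n : 0 < r n by rewrite invr_gt0.
pose A n := (`[s - r n, s + r n]%classic : set T).
have mA n : measurable (A n) by exact: measurable_itv.
have A_dec : nonincreasing_seq A.
  move=> n m nm; apply/subsetPset => v; rewrite /A /= !in_itv /= => /andP[h1 h2].
  have : r m <= r n by rewrite lef_pV2 ?posrE // ler_nat ltnS.
  by move=> ?; apply/andP; split; lra.
have A_cap : \bigcap_n A n = [set s].
  apply/seteqP; split => [v Av|v ->{v} n _]; last first.
    by rewrite /A /= in_itv /=; have := r0 n => ?; apply/andP; split; lra.
  apply/eqP; rewrite eq_le; apply/andP; split; rewrite leNgt; apply/negP;
    move=> /ltr_add_invr[k]; rewrite -/(r k) => hk;
    by have := Av k I; rewrite /A /= in_itv /= => /andP[? ?]; lra.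
have := nonincreasing_cvg_mu (lam_itv_fin _ _) mA (bigcapT_measurable mA) A_dec.
rewrite A_cap lam_set1 => /fine_cvgP[_] /cvgrPdist_lt /(_ e e0)[N _ /(_ N (leqnn N))].
rewrite /= sub0r normrN ger0_norm ?mass_ge0 // => hN.
by exists (r N).
Qed.

Lemma continuous_mass a : continuous (mass a).
Proof.
move=> s; apply/cvgrPdist_lt => e e0.
have [d d0 hd] := mass_small_itv s e0.
apply/nbhs_ballP; exists d => // t; rewrite /ball /= ltr_norml => /andP[t1 t2].
rewrite ltr_norml; case: (lerP s t) => st.
- have := mass_subr_le a st; have := mass_le_subitv (lexx a) st.
  have : mass s t <= mass (s - d) (s + d) by apply: mass_le_subitv; lra.
  by move=> *; apply/andP; split; lra.
- have := mass_subr_le a (ltW st); have := mass_le_subitv (lexx a) (ltW st).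
  have : mass t s <= mass (s - d) (s + d) by apply: mass_le_subitv; lra.
  by move=> *; apply/andP; split; lra.
Qed.

Lemma mass_ivt a b v : a <= b -> 0 <= v <= mass a b ->
  exists2 q, a <= q <= b & mass a q = v.
Proof.
move=> ab hv; have [||q] := @IVT _ (mass a) _ _ v ab.
- exact/continuous_subspaceT/continuous_mass.
- by rewrite massxx min_l ?max_r ?mass_ge0.
- by rewrite in_itv; exists q.
Qed.

End interval_mass.

Section admissible_score.
Context {R : realType} (lam : {measure set (measurableTypeR R) -> \bar R}).
Hypothesis lam_adm : admissible_measure lam.

Let lam_itv_fin : forall a b : R, (lam `[a, b]%classic < +oo)%E := lam_adm.2.2.

Let lam_set1 (a : R) : lam [set a] = 0%E.
Proof.
have : (@lebesgue_measure R).-null_set [set a].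
  by apply/measure0_null_setP => //; exact: lebesgue_measure_set1.
by move/lam_adm.1/measure0_null_setP => ->.
Qed.

Lemma mass_gt0 a b : a < b -> 0 < mass lam a b.
Proof.
move=> ab; rewrite lt_def mass_ge0 // andbT; apply/eqP => mass0.
have : lam.-null_set `[a, b]%classic.
  by apply/measure0_null_setP => //; have := EFin_mass lam_itv_fin a b; rewrite mass0 => /esym.
move/lam_adm.2.1 => /measure0_null_setP => /(_ (measurable_itv _)) /=.
by rewrite lebesgue_measure_itv /= lte_fin ab => -[]; apply/eqP; rewrite subr_eq0 gt_eqF.
Qed.

Lemma score_diff_affine_ub q c : exists a, [/\ q <= c -> 0 <= a, c <= q -> a <= 0 &
  forall x, score lam x c - score lam x q <= a * (c - x)].
Proof.
case: (lerP q c) => qc.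
- exists (mass lam q c); split.
  + by rewrite mass_ge0.
  + move=> cq; have -> : q = c by apply/eqP; rewrite eq_le qc cq.
    by rewrite massxx.
  + by move=> x; rewrite score_diff // mulrC moment_le.
- exists (- mass lam c q); split => [cq|_|x]; first by lra.
  + by rewrite oppr_le0 mass_ge0.
  + rewrite -opprB score_diff //; last exact: ltW.
    by rewrite mulNr lerN2 mulrC moment_ge.
Qed.

Lemma score_diff_affine_lb (c s e : R) : 0 < e ->
  `|s| <= mass lam c (c + e) -> `|s| <= mass lam (c - e) c ->
  exists q, [/\ 0 <= s -> q <= c, s <= 0 -> c <= q &
    forall x, - (e * `|s|) - s * (x - c) <= score lam x c - score lam x q].
Proof.
move=> e0 sR sL; case: (ltgtP 0 s) => [s0|s0|<-]; last first.
- by exists c; split => // x; rewrite normr0 !subrr; lra.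
- have ce : c <= c + e by lra.
  rewrite ltr0_norm // in sR *.
  have [|q /andP[q1 q2] hq] := mass_ivt lam_itv_fin lam_set1 (v := - s) ce.
    by apply/andP; split; lra.
  exists q; split => [?|//|x]; first by lra.
  rewrite -[score lam x c - _]opprB score_diff // (moment_shift lam_itv_fin c q x c) hq.
  have := moment_le lam_itv_fin c q c; rewrite hq.
  have : 0 <= (c + e - q) * - s by rewrite mulr_ge0 ?subr_ge0 ?oppr_ge0 // ltW.
  by nra.
- have ce : c - e <= c by lra.
  rewrite gtr0_norm // in sL *.
  have [|q /andP[q1 q2] hq] := mass_ivt lam_itv_fin lam_set1 (v := mass lam (c - e) c - s) ce.
    by apply/andP; split; lra.
  have mqc : mass lam q c = s by have := mass_split lam_itv_fin lam_set1 q1 q2; lra.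
  exists q; split => [//|?|x]; first by lra.
  rewrite score_diff // (moment_shift lam_itv_fin q c x c) mqc.
  have := moment_ge lam_itv_fin q c c; rewrite mqc.
  have : 0 <= (q - (c - e)) * s by rewrite mulr_ge0 ?subr_ge0 // ltW.
  by nra.
Qed.

Lemma score_diff_affine_lb_scaled (J : finType) (alpha c : J -> R) (e : R) : 0 < e ->
  exists2 t : R, 0 < t & exists q : J -> R, forall j,
    [/\ 0 <= alpha j -> q j <= c j, alpha j <= 0 -> c j <= q j &
     forall x, - (e * (t * `|alpha j|)) - t * alpha j * (x - c j) <=
               score lam x (c j) - score lam x (q j)].
Proof.
move=> e0; pose m j := minr (mass lam (c j) (c j + e)) (mass lam (c j - e) (c j)).
have [|t t0 ht] := exists_scale_le (m := m) alpha.
  by move=> j; rewrite lt_min !mass_gt0 //; lra.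
have tm j : `|t * alpha j| <= m j by rewrite normrM gtr0_norm.
have tmR j : `|t * alpha j| <= mass lam (c j) (c j + e).
  by apply: le_trans (tm j) _; rewrite ge_min lexx.
have tmL j : `|t * alpha j| <= mass lam (c j - e) (c j).
  by apply: le_trans (tm j) _; rewrite ge_min lexx orbT.
have [q {}hq] := boolp.choice (fun j => score_diff_affine_lb e0 (tmR j) (tmL j)).
exists t => //; exists q => j; have [hq1 hq2 hq3] := hq j; split => [a0|a0|x].
- by apply: hq1; rewrite mulr_ge0 // ltW.
- by apply: hq2; rewrite pmulr_rle0.
- by have := hq3 x; rewrite normrM gtr0_norm.
Qed.

End admissible_score.

Section coherence.
Context {R : realType} {I Omega : Type} (C : set (R -> R -> R)).
Context (X : I -> Omega -> R) (B : I -> set Omega) (p : I -> \bar R).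
Hypothesis C_score : scoring_class C.

Lemma coherent1_coherent3 : coherent1 X B p -> coherent3 C X B p.
Proof.
move=> H1 n ix ix_inj g q c Cg p_fin p_pinf p_ninf.
have hg j : exists a, [/\ q j <= c j -> 0 <= a, c j <= q j -> a <= 0 &
    forall x, g j x (c j) - g j x (q j) <= a * (c j - x)].
  by have [lam [lam_adm ->]] := C_score (Cg j); exact: score_diff_affine_ub.
have [a ha] := boolp.choice hg.
apply: le_trans (ereal_inf_range_le_oppe_sup
  (h := fun w => \sum_(j < n) a j * \1_(B (ix j)) w * (X (ix j) w - c j)) _) _.
- move=> w; rewrite -sumrN; apply: ler_sum => j _.
  have [_ _ /(_ (X (ix j) w))] := ha j.
  by rewrite indicE; case: (w \in _) => /=; lra.
- rewrite leeNl oppe0; apply: H1 => // j.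
  + by move/p_pinf; case: (ha j).
  + by move/p_ninf; case: (ha j).
Qed.

Hypothesis C_nonempty : C !=set0.

Lemma coherent3_coherent1 : coherent3 C X B p -> coherent1 X B p.
Proof.
move=> H3 n ix ix_inj alpha c p_pinf p_ninf p_fin.
rewrite leNgt; apply/negP => /ereal_sup_range_lt0[d d0 hd].
have [g Cg] := C_nonempty; have [lam [lam_adm g_lam]] := C_score Cg.
pose K : R := \sum_(j < n) `|alpha j| + 1.
have K0 : 0 < K by rewrite ltr_pwDr // sumr_ge0.
(* [e] makes the approximation error [e t sum_j |alpha_j|] at most half the
   sure gain [t d]. *)
pose e : R := d / (2 * K).
have e0 : 0 < e by rewrite divr_gt0 // mulr_gt0.
have [t t0 [q hq]] := score_diff_affine_lb_scaled lam_adm alpha c e0.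
have q_pinf j : p (ix j) = +oo%E -> q j <= c j by move/p_pinf; case: (hq j).
have q_ninf j : p (ix j) = -oo%E -> c j <= q j by move/p_ninf; case: (hq j).
apply/negP: (H3 n ix ix_inj (fun=> g) q c (fun=> Cg) p_fin q_pinf q_ninf); rewrite -ltNge.
apply: (@lt_le_trans _ _ (t * d / 2)%:E); first by rewrite lte_fin !mulr_gt0.
apply: le_ereal_inf_tmp => _ [w _ <-]; rewrite lee_fin g_lam.
apply: (@le_trans _ _ (\sum_(j < n) (- (e * (t * `|alpha j|)) -
    t * (alpha j * \1_(B (ix j)) w * (X (ix j) w - c j))))).
  rewrite sumrB sumrN -!mulr_sumr.
  have eK : e * K = d / 2 by rewrite /e; field; rewrite gt_eqF.
  have : e * (t * \sum_(j < n) `|alpha j|) <= t * d / 2.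
    rewrite mulrCA -mulrA -eK; apply: ler_wpM2l; first exact: ltW.
    by rewrite ler_wpM2l ?lerDl // ltW.
  have : t * (\sum_(j < n) alpha j * \1_(B (ix j)) w * (X (ix j) w - c j)) <= - (t * d).
    by rewrite -mulrN ler_wpM2l ?hd // ltW.
  lra.
apply: ler_sum => j _; have [_ _ /(_ (X (ix j) w)) hj] := hq j.
have := mulr_ge0 (ltW e0) (mulr_ge0 (ltW t0) (normr_ge0 (alpha j))).
rewrite indicE; case: (_ \in _) => /=; rewrite ?mulr1 ?mul1r ?mulr0 ?mul0r mulrA; lra.
Qed.

End coherence.

Theorem theorem4p1 (R : realType) (I Omega : Type) (w0 : Omega)
  (C : set (R -> R -> R)) (HC : scoring_class C) (HCne : C !=set0)
  (X : I -> Omega -> R) (B : I -> set Omega) (HB : forall i, B i !=set0)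
  (p : I -> \bar R) :
  coherent1 X B p <-> coherent3 C X B p.
Proof. by split; [exact: coherent1_coherent3 | exact: coherent3_coherent1]. Qed.
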